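(* Let $X$ be a real Banach space. (a) Let $x \in S(X)$ and $f \in S(X^* )$ be such that $f(x) > 0$ and, for some $0<t<2$, $s^*(f,x,t) > 0$. Then \[ \operatorname{diam}\big(S(B(X^* ), x, f(x)(1 - s^*(f,x,t)))\big) < 2t. \] (b) An element $f \in S(X^* )$ is a w*-denting point of $B(X^* )$ if and only if $d^*(f,t) > 0$ for all $0<t<2$.
   Context: $B(\cdot)$, $S(\cdot)$ denote closed unit ball and unit sphere. For $x \in S(X)$ and real $\alpha$, the w*-slice is $S(B(X^* ), x, \alpha) := \{g \in B(X^* ) : g(x) > \alpha\}$. An element $f \in S(X^* )$ is a w*-denting point of $B(X^* )$ if for every $\varepsilon>0$ there is a w*-slice $S(B(X^* ),x,\alpha)$ ($x\in S(X)$, $0<\alpha<1$) containing $f$ with diameter less than $\varepsilon$. For $0<t<2$, $f \in S(X^* )$, $x \in S(X)$: $s^*(f,x,t) := \inf\{\|f+h\| - 1 : h \in X^*,\ \|h\| \geq t/4,\ h(x) = 0\}$, and $d^*(f,t) := \sup_{x \in S(X)} s^*(f,x,t)$. *)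

From HB Require Import structures.
From mathcomp Require Import all_boot all_order all_algebra.
From mathcomp Require Import all_classical all_reals all_analysis.
Set Implicit Arguments. Unset Strict Implicit. Unset Printing Implicit Defensive.
Import Order.TTheory GRing.Theory Num.Theory.
Import numFieldNormedType.Exports.
Local Open Scope classical_set_scope.
Local Open Scope ring_scope.

Section Dual.
Variables (R : realType) (X : normedModType R).

Definition is_dual (f : X -> R) : Prop :=
  (forall (a : R) (u v : X), f (a *: u + v) = a * f u + f v) /\ continuous f.

Definition dnorm (f : X -> R) : R :=
  sup [set `|f u| | u in [set u : X | `|u| <= 1]].

Definition unit_sphere : set X := [set u | `|u| = 1].
Definition dual_ball : set (X -> R) := [set g | is_dual g /\ dnorm g <= 1].
Definition dual_sphere : set (X -> R) := [set g | is_dual g /\ dnorm g = 1].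

Definition wslice (x : X) (alpha : R) : set (X -> R) :=
  [set g | dual_ball g /\ alpha < g x].

Definition ddiam (A : set (X -> R)) : R :=
  sup [set dnorm (g1 - g2) | g1 in A & g2 in A].

Definition wstar_denting (f : X -> R) : Prop :=
  dual_sphere f /\
  forall eps : R, 0 < eps -> exists (x : X) (alpha : R),
    unit_sphere x /\ 0 < alpha < 1 /\ wslice x alpha f /\ ddiam (wslice x alpha) < eps.

(* s^*(f,x,t), valued in extended reals (inf of the empty set = +oo) *)
Definition sstar (f : X -> R) (x : X) (t : R) : \bar R :=
  ereal_inf [set ((dnorm (f + h) - 1)%:E) |
              h in [set h : X -> R | is_dual h /\ t / 4 <= dnorm h /\ h x = 0]].

Definition dstar (f : X -> R) (t : R) : \bar R :=
  ereal_sup [set sstar f x t | x in unit_sphere].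

End Dual.

From HB Require Import structures.
From mathcomp Require Import all_boot all_order all_algebra.
From mathcomp Require Import all_classical all_reals all_analysis.
From mathcomp Require Import ring lra.
Import Order.TTheory GRing.Theory Num.Theory.
Import numFieldNormedType.Exports.
Local Open Scope classical_set_scope.
Local Open Scope ring_scope.
Set Implicit Arguments. Unset Strict Implicit.

(* Let 0 < s <= s^*(f,x,t) with s <= t/4, let g lie in the slice S(x, f(x)(1 - s)), and
   put l = f(x)/g(x). Then h = l g - f vanishes at x, and testing s^* against h rescaled
   to norm t/4 (so that f plus it lies on the segment from f to l g) gives
   ||h|| s <= (t/4)(l - 1) whenever ||h|| >= t/4; the slice condition gives
   l (1 - s) < 1. Together these bound ||g - f|| <= |1 - l| + ||h|| by t/(2(1 - s)), so
   the slice has diameter < 2t; this is (a), and it yields w*-denting slices once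
   d^*(f,t) > 0 (after replacing x by -x so that f(x) > 0). Conversely, if a slice containing f has diameter < t/8, then for an
   admissible h with ||f + h|| close to 1 the functional (f + h)/max(||f + h||, 1) lies
   in the slice, which forces ||h|| < t/4; hence s^*(f,x,t) > 0. *)

Section DualNorm.
Variables (R : realType) (X : normedModType R).
Implicit Types (f g h k : X -> R) (x u : X) (a c : R).

Lemma scale_fctE a g u : (a *: g) u = a * g u.
Proof. by []. Qed.

Lemma dual0 g : is_dual g -> g 0 = 0.
Proof.
move=> [lin _]; have := lin 1 0 0; rewrite scaler0 addr0 mul1r.
by move=> /esym/eqP; rewrite -subr_eq0 addrK => /eqP.
Qed.

Lemma dualZ g a u : is_dual g -> g (a *: u) = a * g u.
Proof. by move=> hg; have := hg.1 a u 0; rewrite !addr0 (dual0 hg) addr0. Qed.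

Lemma dualN g u : is_dual g -> g (- u) = - g u.
Proof. by move=> hg; rewrite -scaleN1r dualZ // mulN1r. Qed.

Lemma is_dualD g k : is_dual g -> is_dual k -> is_dual (g + k).
Proof.
move=> [lg cg] [lk ck]; split=> [a u v | u]; first by rewrite addrfctE /= lg lk; ring.
exact: (cvgD (cg u) (ck u)).
Qed.

Lemma is_dualZ a g : is_dual g -> is_dual (a *: g).
Proof.
move=> [lg cg]; split=> [c u v | u]; first by rewrite !scale_fctE lg; ring.
by rewrite -[a *: g]/(fun w => a * g w); apply: cvgMl_tmp; exact: cg.
Qed.

Lemma is_dualB g k : is_dual g -> is_dual k -> is_dual (g - k).
Proof. by move=> hg hk; rewrite -scaleN1r; apply/is_dualD/is_dualZ. Qed.

Lemma dual_bounded g : is_dual g -> exists M, forall u, `|u| <= 1 -> `|g u| <= M.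
Proof.
move=> hg; have /cvgr_dist_lt/(_ _ ltr01) := hg.2 0; rewrite (dual0 hg).
move=> /nbhs_norm0P [e /= e0 he]; exists (2 / e) => u hu.
have e20 : 0 < e / 2 by rewrite divr_gt0.
have : `|(e / 2) *: u| < e.
  rewrite normrZ gtr0_norm //; apply: (le_lt_trans (y := e / 2)); last lra.
  by rewrite ler_piMr // ltW.
move=> /he; rewrite /= sub0r normrN dualZ // normrM gtr0_norm // => lt1.
rewrite -(ler_pM2l e20) (_ : e / 2 * (2 / e) = 1) ?ltW //.
by field; rewrite gt_eqF.
Qed.

Lemma dnorm_ub g u : is_dual g -> `|u| <= 1 -> `|g u| <= dnorm g.
Proof.
move=> hg hu; have [M hM] := dual_bounded hg.
by apply: ub_le_sup; [exists M => _ [v hv <-]; exact: hM | exists u].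
Qed.

Lemma dnorm_lub g c : (forall u, `|u| <= 1 -> `|g u| <= c) -> dnorm g <= c.
Proof.
move=> hc; apply: ge_sup; first by exists `|g 0|, 0; rewrite //= normr0.
by move=> _ [v hv <-]; exact: hc.
Qed.

Lemma dnorm_ge0 g : is_dual g -> 0 <= dnorm g.
Proof. by move=> hg; apply: le_trans (dnorm_ub (u := 0) hg _); rewrite ?normr0. Qed.

Lemma ler_dnorm g u : is_dual g -> `|g u| <= dnorm g * `|u|.
Proof.
move=> hg; have [->|u0] := eqVneq u 0; first by rewrite (dual0 hg) !normr0 mulr0.
have nu : 0 < `|u| by rewrite normr_gt0.
have := dnorm_ub (u := `|u|^-1 *: u) hg.
rewrite normrZ normfV normr_id mulVf ?gt_eqF // lexx => /(_ isT).
by rewrite dualZ // normrM normfV normr_id ler_pdivrMl // mulrC.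
Qed.

Lemma dnormD g k : is_dual g -> is_dual k -> dnorm (g + k) <= dnorm g + dnorm k.
Proof.
move=> hg hk; apply: dnorm_lub => u hu; apply: le_trans (ler_normD _ _) _.
by apply: lerD; exact: dnorm_ub.
Qed.

Lemma dnormZ a g : is_dual g -> dnorm (a *: g) = `|a| * dnorm g.
Proof.
move=> hg; apply/eqP; rewrite eq_le; apply/andP; split.
  apply: dnorm_lub => u hu; rewrite scale_fctE normrM.
  by apply: ler_wpM2l => //; exact: dnorm_ub.
have [->|a0] := eqVneq a 0; first by rewrite normr0 mul0r; apply/dnorm_ge0/is_dualZ.
rewrite -ler_pdivlMl ?normr_gt0 //; apply: dnorm_lub => u hu.
rewrite ler_pdivlMl ?normr_gt0 // -normrM -scale_fctE.
exact: dnorm_ub (is_dualZ a hg) hu.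
Qed.

Lemma dnormB g k : is_dual g -> is_dual k -> dnorm (g - k) <= dnorm g + dnorm k.
Proof.
move=> hg hk; rewrite -scaleN1r; apply: le_trans (dnormD hg (is_dualZ _ hk)) _.
by rewrite dnormZ // normrN1 mul1r.
Qed.

Lemma ddiam_ub (A : set (X -> R)) g1 g2 : A `<=` dual_ball (X:=X) -> A g1 -> A g2 ->
  dnorm (g1 - g2) <= ddiam A.
Proof.
move=> sA A1 A2; apply: ub_le_sup; last by exists g1 => //; exists g2.
exists 2 => _ [k1 /sA [d1 n1] [k2 /sA [d2 n2] <-]].
by apply: le_trans (dnormB d1 d2) _; lra.
Qed.

Lemma ddiam_le_radius (A : set (X -> R)) f c : is_dual f -> A `<=` dual_ball (X:=X) ->
  0 <= c -> (forall g, A g -> dnorm (g - f) <= c) -> ddiam A <= 2 * c.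
Proof.
move=> hf sA c0 hc.
have [[y Ay]|A0] := pselect ([set dnorm (g1 - g2) | g1 in A & g2 in A] !=set0).
  apply: ge_sup; first by exists y.
  move=> _ [g1 A1 [g2 A2 <-]]; have [[d1 _] [d2 _]] := (sA _ A1, sA _ A2).
  rewrite (_ : g1 - g2 = (g1 - f) - (g2 - f)); last by rewrite opprB addrA subrK.
  apply: le_trans (dnormB (is_dualB d1 hf) (is_dualB d2 hf)) _.
  by have := hc _ A1; have := hc _ A2; lra.
rewrite /ddiam (_ : [set _ | g1 in A & g2 in A] = set0) ?sup0 ?mulr_ge0 //.
by apply/seteqP; split => // z Az; apply: A0; exists z.
Qed.

Lemma wslice_sub_ball x a : wslice x a `<=` dual_ball (X:=X).
Proof. by move=> g []. Qed.

Lemma sstar_le_dnorm f x t h : is_dual h -> t / 4 <= dnorm h -> h x = 0 ->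
  (sstar f x t <= (dnorm (f + h) - 1)%:E)%E.
Proof. by move=> hh nh hx; apply: ereal_inf_lbound; exists h. Qed.

Lemma dnorm_normalize c h : 0 <= c -> is_dual h -> 0 < dnorm h ->
  dnorm ((c / dnorm h) *: h) = c.
Proof.
move=> c0 hh r0; rewrite dnormZ // ger0_norm ?divr_ge0 ?(ltW r0) //.
by rewrite mulfVK ?gt_eqF.
Qed.

Lemma sstar_le_normalize f x t h : 0 <= t -> is_dual h -> 0 < dnorm h -> h x = 0 ->
  (sstar f x t <= (dnorm (f + (t / 4 / dnorm h) *: h) - 1)%:E)%E.
Proof.
move=> t0 hh r0 hx; apply: sstar_le_dnorm; first exact: is_dualZ.
  by rewrite dnorm_normalize // divr_ge0.
by rewrite scale_fctE hx mulr0.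
Qed.

Lemma sstar_le_quarter f x t : dual_sphere f -> 0 < t -> (sstar f x t < +oo)%E ->
  (sstar f x t <= (t / 4)%:E)%E.
Proof.
move=> [hf nf] t0 /ereal_inf_lt [_ [h [hh [nh hx]] <-] _].
have r0 : 0 < dnorm h by apply: lt_le_trans nh; lra.
apply: le_trans (sstar_le_normalize f (ltW t0) hh r0 hx) _; rewrite lee_fin lerBlDl.
apply: le_trans (dnormD hf (is_dualZ _ hh)) _.
by rewrite nf dnorm_normalize ?divr_ge0 ?(ltW t0) // addrC.
Qed.

Lemma sstar_le_slope f g x t l : dual_sphere f -> dual_ball g -> 0 < l -> 0 < t ->
  t / 4 <= dnorm (l *: g - f) -> (l *: g - f) x = 0 ->
  (sstar f x t <= (t / 4 / dnorm (l *: g - f) * (l - 1))%:E)%E.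
Proof.
move=> [hf nf] [hg ng] l0 t0 nh hx.
have hh : is_dual (l *: g - f) by apply/is_dualB/hf/is_dualZ.
have r0 : 0 < dnorm (l *: g - f) by apply: lt_le_trans nh; lra.
apply: le_trans (sstar_le_normalize f (ltW t0) hh r0 hx) _.
set th := t / 4 / dnorm (l *: g - f).
have th0 : 0 < th by rewrite !divr_gt0.
have th1 : th <= 1 by rewrite ler_pdivrMr // mul1r.
rewrite lee_fin (_ : f + th *: _ = (1 - th) *: f + (th * l) *: g); last first.
  by rewrite scalerBr scalerA scalerBl scale1r addrCA addrC.
have := dnormD (is_dualZ (1 - th) hf) (is_dualZ (th * l) hg).
rewrite !dnormZ // nf ger0_norm ?subr_ge0 // (gtr0_norm (mulr_gt0 th0 l0)).
have := ler_wpM2l (mulr_ge0 (ltW th0) (ltW l0)) ng; lra.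
Qed.

(* The hypotheses are what a functional g of the slice provides for a = f(x)/g(x) and
   r = ||a g - f||. *)
Lemma slice_radius_bound a r s t : 0 < s < 1 -> s <= t / 4 -> 0 <= r -> 1 <= a + r ->
  a * (1 - s) < 1 -> (t / 4 <= r -> r * s <= t / 4 * (a - 1)) ->
  2 * (1 - s) * (`|1 - a| + r) <= t.
Proof.
move=> /andP[s0 s1] st r0 ar as1 slope.
have t4 : 0 < t / 4 by apply: lt_le_trans st.
have slope_lt : t / 4 <= r -> (1 - s) * r < t / 4.
  move=> /slope rs; rewrite -(ltr_pM2r s0).
  have : r * s * (1 - s) <= t / 4 * (a - 1) * (1 - s) by apply: ler_wpM2r; lra.
  nra.
have r_small : r < t / 4 -> (1 - s) * r <= t / 4.
  by move=> rt; nra.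
suff : (1 - s) * `|1 - a| <= t / 4 /\ (1 - s) * r <= t / 4 by lra.
have [a1|a1] := leP a 1.
  have rt : r < t / 4.
    rewrite ltNge; apply/negP => /[dup] /slope rs tr.
    have : 0 < r * s by rewrite mulr_gt0 // (lt_le_trans t4).
    have : t / 4 * (a - 1) <= 0 by rewrite pmulr_rle0 // subr_le0.
    lra.
  split; last exact: r_small.
  by rewrite ger0_norm ?subr_ge0 //; nra.
split; first by rewrite ltr0_norm ?subr_lt0 // opprB; nra.
have [rt|rt] := ltP r (t / 4); [exact: r_small | exact/ltW/slope_lt].
Qed.

Lemma wslice_dist_le f x t s g : dual_sphere f -> 0 < f x -> 0 < s < 1 -> s <= t / 4 ->
  (s%:E <= sstar f x t)%E -> wslice x (f x * (1 - s)) g ->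
  2 * (1 - s) * dnorm (g - f) <= t.
Proof.
move=> hf fx0 s01 st sle [hgb gx]; have [[dg ng] [df nf]] := (hgb, hf).
have s1 : 0 < 1 - s by case/andP: s01 => _; rewrite subr_gt0.
have t0 : 0 < t by case/andP: s01 => s0 _; lra.
have gx0 : 0 < g x by apply: lt_trans gx; rewrite mulr_gt0.
set l := f x / g x.
have l0 : 0 < l by rewrite divr_gt0.
have lgx : l * g x = f x by rewrite mulfVK ?gt_eqF.
set h := l *: g - f.
have hh : is_dual h by apply/is_dualB/df/is_dualZ.
have hx : h x = 0 by rewrite /h !fctE -[l *: _]/(l * _) lgx subrr.
have r0 := dnorm_ge0 hh.
have gf : dnorm (g - f) <= `|1 - l| + dnorm h.
  rewrite (_ : g - f = (1 - l) *: g + h); last by rewrite scalerBl scale1r addrA subrK.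
  apply: le_trans (dnormD (is_dualZ _ dg) hh) _; rewrite dnormZ //.
  by apply: lerD => //; exact: ler_piMr (normr_ge0 _) ng.
have lr : 1 <= l + dnorm h.
  rewrite -nf {1}(_ : f = l *: g - h); last by rewrite opprB addrC subrK.
  apply: le_trans (dnormB (is_dualZ _ dg) hh) _; rewrite dnormZ // gtr0_norm //.
  by apply: lerD => //; exact: ler_piMr (ltW l0) ng.
have ls : l * (1 - s) < 1 by rewrite -(ltr_pM2r gx0) mul1r mulrAC lgx.
have slope : t / 4 <= dnorm h -> dnorm h * s <= t / 4 * (l - 1).
  move=> tr; have rpos : 0 < dnorm h by apply: lt_le_trans tr; lra.
  have := le_trans sle (sstar_le_slope hf hgb l0 t0 tr hx); rewrite lee_fin -/h.
  by move=> /(ler_wpM2l (ltW rpos)); rewrite mulrA mulrCA divff ?gt_eqF // mulr1.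
apply: le_trans (slice_radius_bound s01 st r0 lr ls slope).
by rewrite ler_wpM2l // mulr_ge0 // ltW.
Qed.

Lemma wslice_diam_lt f x t s : dual_sphere f -> 0 < f x -> 0 < t < 2 -> 0 < s -> s <= t / 4 ->
  (s%:E <= sstar f x t)%E -> ddiam (wslice x (f x * (1 - s))) < 2 * t.
Proof.
move=> hf fx0 /andP[t0 t2] s0 st sle.
have s1 : 0 < 1 - s by lra.
have s01 : 0 < s < 1 by apply/andP; split; lra.
apply: (le_lt_trans (y := 2 * (t / (2 * (1 - s))))).
  apply: ddiam_le_radius hf.1 (@wslice_sub_ball _ _) _ _.
    by rewrite divr_ge0 ?mulr_ge0 // ltW.
  move=> g /(wslice_dist_le hf fx0 s01 st sle).
  by rewrite ler_pdivlMr ?mulr_gt0 // mulrC.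
by rewrite ltr_pM2l // ltr_pdivrMr ?mulr_gt0 //; nra.
Qed.

Lemma sstarN f x t : sstar f (- x) t = sstar f x t.
Proof.
rewrite /sstar; congr ereal_inf; apply/seteqP; split=> _ [h [hh [nh hx]] <-];
  exists h => //; do 2!split => //.
  by move: hx; rewrite dualN // => /eqP; rewrite oppr_eq0 => /eqP.
by rewrite dualN // hx oppr0.
Qed.

Lemma sstar_gt0_neq0 f x t : dual_sphere f -> t <= 4 -> (0 < sstar f x t)%E -> f x != 0.
Proof.
move=> [hf nf] t4 s0; apply/eqP => fx0; move: s0; apply/negP; rewrite -leNgt.
have hnf : is_dual (- f) by rewrite -scaleN1r; exact: is_dualZ.
have dnf : dnorm (- f) = 1 by rewrite -scaleN1r dnormZ // normrN1 mul1r.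
apply: le_trans (sstar_le_dnorm f hnf _ _) _; first by rewrite dnf; lra.
  by rewrite opprfctE fx0 oppr0.
rewrite subrr lee_fin subr_le0; apply: dnorm_lub => u _.
by rewrite normr0.
Qed.

Lemma dnorm_le_wslice_diam f h x a : dual_sphere f -> is_dual h -> h x = 0 -> 0 < a ->
  a * Num.max (dnorm (f + h)) 1 < f x ->
  dnorm h <= Num.max (dnorm (f + h)) 1 - 1 + ddiam (wslice x a).
Proof.
move=> [hf nf] hh hx a0; set m := Num.max _ 1 => am.
have m1 : 1 <= m by rewrite le_max lexx orbT.
have m0 : 0 < m by lra.
have hfh := is_dualD hf hh.
set g := m^-1 *: (f + h).
have hg : is_dual g by exact: is_dualZ.
have gS : wslice x a g.
  split; first split => //.
    rewrite dnormZ // normfV gtr0_norm // ler_pdivrMl // mulr1.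
    by rewrite le_max lexx.
  by rewrite /g scale_fctE addrfctE hx addr0 mulrC ltr_pdivlMr // mulrC.
have fS : wslice x a f.
  split; first by split; rewrite ?nf.
  by apply: le_lt_trans am; rewrite ler_peMr // ltW.
rewrite (_ : h = (m - 1) *: g + (g - f)); last first.
  by rewrite addrA -{2}(scale1r g) -scalerDl subrK scalerA mulfV ?gt_eqF // scale1r addrC addKr.
apply: le_trans (dnormD (is_dualZ _ hg) (is_dualB hg hf)) _.
apply: lerD; last exact: ddiam_ub (@wslice_sub_ball _ _) gS fS.
rewrite dnormZ // ger0_norm ?subr_ge0 //; apply: ler_piMr; first lra.
by case: gS => -[].
Qed.

Lemma wstar_denting_dstar_gt0 f t : wstar_denting f -> 0 < t -> (0 < dstar f t)%E.
Proof.
move=> [hf hdent] t0.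
have [x [a [ux [/andP[a0 a1] [[_ afx] diam_lt]]]]] := hdent (t / 8) (ltac:(lra)).
have fx0 : 0 < f x by apply: lt_trans afx.
set c := Num.min (f x / a - 1) (t / 8).
have c0 : 0 < c by rewrite lt_min subr_gt0 ltr_pdivlMr // mul1r afx /=; lra.
have cfx : a * (1 + c) <= f x.
  have /(ler_wpM2l (ltW a0)) : c <= f x / a - 1 by rewrite ge_min lexx.
  rewrite mulrBr mulr1 mulrCA divff ?gt_eqF // mulr1; lra.
have ct : c <= t / 8 by rewrite ge_min lexx orbT.
apply: (lt_le_trans (y := c%:E)); first by rewrite lte_fin.
apply: le_trans (ereal_sup_ubound _) ; last by exists x.
apply: le_ereal_inf_tmp => _ [h [hh [nh hx]] <-]; rewrite lee_fin lerBrDl leNgt.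
apply/negP => lt_c.
have m_lt : Num.max (dnorm (f + h)) 1 < 1 + c by rewrite gt_max lt_c /= ltrDl.
have am : a * Num.max (dnorm (f + h)) 1 < f x by apply: lt_le_trans cfx; rewrite ltr_pM2l.
have := dnorm_le_wslice_diam hf hh hx a0 am; lra.
Qed.

Lemma dstar_gt0_wstar_denting f : dual_sphere f ->
  (forall t, 0 < t < 2 -> (0 < dstar f t)%E) -> wstar_denting f.
Proof.
move=> hf dpos; split => // eps e0.
set t := Num.min (eps / 4) 1.
have t0 : 0 < t by rewrite lt_min; apply/andP; split; lra.
have te : t <= eps / 4 by rewrite ge_min lexx.
have t1 : t <= 1 by rewrite ge_min lexx orbT.
have /ereal_sup_gt [_ [x ux <-] sx] : (0 < dstar f t)%E.
  by apply: dpos; apply/andP; split; lra.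
have [y [uy [fy sy]]] : exists y, unit_sphere y /\ 0 < f y /\ (0 < sstar f y t)%E.
  have [fx_pos|fx_le] := ltP 0 (f x); first by exists x.
  exists (- x); split; first by rewrite /unit_sphere /= normrN.
  rewrite sstarN (dualN _ hf.1) oppr_gt0 lt_neqAle fx_le andbT; split => //.
  by apply: sstar_gt0_neq0 hf _ sx; lra.
have [s [s0 [st ss]]] : exists s, 0 < s /\ s <= t / 4 /\ (s%:E <= sstar f y t)%E.
  move: sy; case: (sstar f y t) => [r| |] //; last by exists (t / 4); rewrite leey; lra.
  rewrite lte_fin => r0; exists (Num.min (t / 4) r).
  by rewrite lt_min ge_min lexx lee_fin ge_min lexx orbT r0; split => //; lra.
have fy1 : f y <= 1.
  by apply: le_trans (ler_norm _) _; have := ler_dnorm y hf.1; rewrite hf.2 uy mulr1.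
exists y, (f y * (1 - s)); split => //; split; first by apply/andP; split; nra.
split; first by split; [split; [exact: hf.1 | rewrite hf.2] | nra].
apply: lt_le_trans (wslice_diam_lt hf fy _ s0 st ss) _; last lra.
by apply/andP; split; lra.
Qed.

End DualNorm.

Theorem mainTheorem3 (R : realType) (X : completeNormedModType R) :
  (forall (x : X) (f : X -> R) (t : R),
      unit_sphere x -> dual_sphere f -> 0 < f x -> 0 < t < 2 ->
      (0 < sstar f x t)%E -> (sstar f x t < +oo)%E ->
      ddiam (wslice x (f x * (1 - fine (sstar f x t)))) < 2 * t)
  /\
  (forall f : X -> R, dual_sphere f ->
      (wstar_denting f <-> forall t : R, 0 < t < 2 -> (0 < dstar f t)%E)).
Proof.
split.
  move=> x f t _ hf fx0 ht s0 s_oo.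
  have s_le := sstar_le_quarter hf (andP ht).1 s_oo.
  move: s0 s_oo s_le; case E: (sstar f x t) => [s| |] //= s0 _ s_le.
  rewrite lte_fin in s0; rewrite lee_fin in s_le.
  by apply: wslice_diam_lt hf fx0 ht s0 s_le _; rewrite E.
move=> f hf; split; last exact: dstar_gt0_wstar_denting.
by move=> dent t /andP[t0 _]; exact: wstar_denting_dstar_gt0 dent t0.
Qed.
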